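(* Let $n\ge2$, let $\mathbb{F}$ be an algebraic extension of a prime field and let $p$ be an odd prime. (i) If $\mathrm{char}(\mathbb{F})$ is $0$, or $\mathrm{char}(\mathbb{F})=p$ with $\gcd(n,p)=1$, then $\mathrm{Der}(\mathbb{F}T_{4n})=\mathrm{Der}_{\mathrm{inn}}(\mathbb{F}T_{4n})$. (ii) If $\mathrm{char}(\mathbb{F})=p$ with $\gcd(n,p)\ne1$, then $\mathrm{Der}_{\mathrm{inn}}(\mathbb{F}T_{4n})\subsetneq\mathrm{Der}(\mathbb{F}T_{4n})$, i.e. $\mathbb{F}T_{4n}$ has a derivation that is not inner.
   Context: $T_{4n}=\langle a,b\mid a^{2n}=1,\ a^n=b^2,\ b^{-1}ab=a^{-1}\rangle$ is the dicyclic group of order $4n$; $\mathbb{F}T_{4n}$ is its group algebra. A derivation of a ring $R$ is a map $d:R\to R$ with $d(x+y)=d(x)+d(y)$ and $d(xy)=d(x)y+xd(y)$; $\mathrm{Der}(R)$ is the set of all derivations. An inner derivation is one of the form $d_\beta(\alpha)=\alpha\beta-\beta\alpha$ for fixed $\beta\in R$; $\mathrm{Der}_{\mathrm{inn}}(R)$ is the set of inner derivations. *)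

From HB Require Import structures.
From mathcomp Require Import all_boot all_order all_algebra all_fingroup.
Set Implicit Arguments. Unset Strict Implicit. Unset Printing Implicit Defensive.
Import GRing.Theory.
Local Open Scope ring_scope.

(* Group algebra F[gT] of a finite group gT over a field F: finitely
   supported functions gT -> F (all functions, gT being finite), with
   pointwise addition (the zmodType of {ffun _ -> F}) and convolution product
   (f * g)(x) = sum_y f(y) g(y^-1 x), i.e. sum_x f(x) x * sum_y g(y) y. *)
Definition galg (F : fieldType) (gT : finGroupType) := {ffun gT -> F}.

Definition galg_mul (F : fieldType) (gT : finGroupType) (f g : galg F gT)
  : galg F gT :=
  [ffun x : gT => \sum_(y : gT) f y * g ((y^-1 * x)%g)].

Definition is_derivation (F : fieldType) (gT : finGroupType)
  (d : galg F gT -> galg F gT) : Prop :=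
  (forall x y : galg F gT, d (x + y) = d x + d y) /\
  (forall x y : galg F gT,
     d (galg_mul x y) = galg_mul (d x) y + galg_mul x (d y)).

Definition is_inner_derivation (F : fieldType) (gT : finGroupType)
  (d : galg F gT -> galg F gT) : Prop :=
  exists beta : galg F gT,
    forall alpha : galg F gT, d alpha = galg_mul alpha beta - galg_mul beta alpha.

(* F is an algebraic extension of its prime field: every element is a root of
   a polynomial with integer coefficients whose image in F[X] is nonzero
   (i.e. a nonzero polynomial over the prime subfield Q or F_p). *)
Definition algebraic_over_prime_field (F : fieldType) : Prop :=
  forall x : F, exists q : {poly int},
    map_poly (intr : int -> F) q != 0 /\ root (map_poly (intr : int -> F) q) x.

From HB Require Import structures.
From mathcomp Require Import all_boot all_order all_algebra all_fingroup all_solvable zify.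
Set Implicit Arguments. Unset Strict Implicit. Unset Printing Implicit Defensive.
Import GRing.Theory.
Local Open Scope ring_scope.

(* (i) A derivation d of F[G] kills the prime field, hence every simple root of
   an integer polynomial; as F is algebraic over its prime field, every element
   of F is such a root, so d is F-linear.  If |G| is invertible in F, averaging
   gives d = [., beta] with beta = -|G|^-1 sum_h d(h) h^-1.  For G = T_4n, the
   order |G| divides 4n, hence is invertible under the hypotheses of (i).
   (ii) If p | n, then p | #[a]: otherwise the dihedral group of order 2p, a
   quotient of T_4n, would be abelian.  Reducing the exponent of a modulo p
   therefore gives a crossed homomorphism psi(gh) = eps(h) psi(g) + psi(h),
   where eps is the sign of G/<a>.  Since z = a - a^-1 satisfies z h = eps(h) h z,
   g |-> psi(g) g z is a 1-cocycle, hence defines a derivation; it does not vanish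
   on the central element a + a^-1, so it is not inner. *)

Section GroupAlgebra.
Variables (F : fieldType) (gT : finGroupType).
Local Notation A := (galg F gT).

Definition galg_of (g : gT) : A := [ffun x => (x == g)%:R].
Definition galg_scale (c : F) (f : A) : A := [ffun x => c * f x].

Lemma galg_mul_ofl g (f : A) : galg_mul (galg_of g) f = [ffun x => f (g^-1 * x)%g].
Proof.
apply/ffunP=> x; rewrite !ffunE (bigD1 g) //= big1 ?addr0; first by rewrite ffunE eqxx mul1r.
by move=> y /negbTE ne; rewrite ffunE ne mul0r.
Qed.

Lemma galg_mul_ofr g (f : A) : galg_mul f (galg_of g) = [ffun x => f (x * g^-1)%g].
Proof.
apply/ffunP=> x; rewrite !ffunE (bigD1 (x * g^-1)%g) //= big1 ?addr0.
  by rewrite ffunE invMg invgK mulgKV eqxx mulr1.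
move=> y ne; rewrite ffunE; case: eqP => [e|]; last by rewrite mulr0.
by case/eqP: ne; rewrite -e invMg invgK mulKVg.
Qed.

Lemma galg_mulA : associative (@galg_mul F gT).
Proof.
move=> f g h; apply/esym/ffunP=> x; rewrite !ffunE.
rewrite (eq_bigr (fun y => \sum_z f z * g (z^-1 * y)%g * h (y^-1 * x)%g)); last first.
  by move=> y _; rewrite ffunE mulr_suml.
rewrite [RHS](eq_bigr (fun z => \sum_w f z * (g w * h (w^-1 * (z^-1 * x))%g))); last first.
  by move=> z _; rewrite ffunE mulr_sumr.
rewrite exchange_big /=; apply: eq_bigr => z _.
rewrite (reindex_inj (mulgI z)) /=; apply: eq_bigr => w _.
by rewrite mulKg invMg -mulgA mulrA.
Qed.

Lemma galg_mul1l : left_id (galg_of 1) (@galg_mul F gT).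
Proof. by move=> f; apply/ffunP=> x; rewrite galg_mul_ofl ffunE invg1 mul1g. Qed.

Lemma galg_mul1r : right_id (galg_of 1) (@galg_mul F gT).
Proof. by move=> f; apply/ffunP=> x; rewrite galg_mul_ofr ffunE invg1 mulg1. Qed.

Lemma galg_mulDl : left_distributive (@galg_mul F gT) +%R.
Proof.
move=> f g h; apply/ffunP=> x; rewrite !ffunE -big_split.
by apply: eq_bigr => y _; rewrite ffunE mulrDl.
Qed.

Lemma galg_mulDr : right_distributive (@galg_mul F gT) +%R.
Proof.
move=> f g h; apply/ffunP=> x; rewrite !ffunE -big_split.
by apply: eq_bigr => y _; rewrite ffunE mulrDr.
Qed.

Lemma galg_of1_neq0 : galg_of 1 != 0.
Proof. by apply/eqP=> /ffunP/(_ 1%g); rewrite !ffunE eqxx => /eqP; rewrite oner_eq0. Qed.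

HB.instance Definition _ := GRing.Zmodule.on A.
HB.instance Definition _ := GRing.Zmodule_isNzRing.Build A
  galg_mulA galg_mul1l galg_mul1r galg_mulDl galg_mulDr galg_of1_neq0.

Lemma galg_scaleA a b (f : A) : galg_scale a (galg_scale b f) = galg_scale (a * b) f.
Proof. by apply/ffunP=> x; rewrite !ffunE mulrA. Qed.

Lemma galg_scale1 : left_id 1 galg_scale.
Proof. by move=> f; apply/ffunP=> x; rewrite !ffunE mul1r. Qed.

Lemma galg_scaleDr : right_distributive galg_scale +%R.
Proof. by move=> c f g; apply/ffunP=> x; rewrite !ffunE mulrDr. Qed.

Lemma galg_scaleDl (f : A) : {morph galg_scale^~ f : a b / a + b}.
Proof. by move=> a b; apply/ffunP=> x; rewrite !ffunE mulrDl. Qed.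

HB.instance Definition _ := GRing.Zmodule_isLmodule.Build F A
  galg_scaleA galg_scale1 galg_scaleDr galg_scaleDl.

Lemma galg_scaleAl c (f g : A) : c *: (f * g) = (c *: f) * g.
Proof.
apply/ffunP=> x; rewrite !ffunE mulr_sumr.
by apply: eq_bigr => y _; rewrite ffunE mulrA.
Qed.

HB.instance Definition _ := GRing.Lmodule_isLalgebra.Build F A galg_scaleAl.

Lemma galg_scaleAr c (f g : A) : c *: (f * g) = f * (c *: g).
Proof.
apply/ffunP=> x; rewrite !ffunE mulr_sumr.
by apply: eq_bigr => y _; rewrite ffunE mulrCA.
Qed.

HB.instance Definition _ := GRing.Lalgebra_isAlgebra.Build F A galg_scaleAr.

Lemma galg_mulE (f g : A) : f * g = galg_mul f g.
Proof. by []. Qed.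

Lemma galg_scaleE c (f : A) x : (c *: f) x = c * f x.
Proof. by rewrite ffunE. Qed.

Lemma galg_ofE g x : galg_of g x = (x == g)%:R.
Proof. by rewrite ffunE. Qed.

Lemma galg_ofM g h : galg_of g * galg_of h = galg_of (g * h)%g.
Proof.
apply/ffunP=> x; rewrite galg_mulE galg_mul_ofl !ffunE; congr ((_ : bool)%:R).
by apply/eqP/eqP=> [<-|->]; rewrite ?mulKVg ?mulKg.
Qed.

Lemma galg_of_conjg g h : galg_of g * galg_of h = galg_of h * galg_of (g ^ h)%g.
Proof. by rewrite !galg_ofM conjgC. Qed.

Lemma galg_expand (f : A) : f = \sum_g f g *: galg_of g.
Proof.
apply/ffunP=> x; rewrite sum_ffunE (bigD1 x) //= big1 ?addr0.
  by rewrite galg_scaleE galg_ofE eqxx mulr1.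
by move=> y ne; rewrite galg_scaleE galg_ofE eq_sym (negbTE ne) mulr0.
Qed.

Lemma galg_central (c : A) :
  (forall g, c * galg_of g = galg_of g * c) -> forall x, c * x = x * c.
Proof.
move=> cg x; rewrite (galg_expand x) mulr_sumr mulr_suml.
by apply: eq_bigr => g _; rewrite -scalerAr cg scalerAl.
Qed.

End GroupAlgebra.

Arguments galg_of {F gT} g.
Arguments galg_of_conjg {F gT} g h.

Section FieldDerivation.
Variables (F : fieldType) (V : lmodType F) (delta : F -> V).
Hypotheses (deltaD : {morph delta : x y / x + y})
  (deltaM : forall x y, delta (x * y) = y *: delta x + x *: delta y).

Let deltaB : zmod_morphism delta.
Proof. by move=> x y; apply: (addIr (delta y)); rewrite -deltaD !subrK. Qed.

HB.instance Definition _ := GRing.isZmodMorphism.Build F V delta deltaB.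

Lemma field_derivation_int (m : int) : delta m%:~R = 0.
Proof.
have delta1 : delta 1 = 0.
  apply: (addrI (delta 1)).
  by rewrite addr0 -[RHS](congr1 delta (mulr1 1)) deltaM scale1r.
by rewrite raddfMz /= delta1 mul0rz.
Qed.

Lemma field_derivation_horner (q : {poly int}) c :
  delta (map_poly intr q).[c] = (map_poly intr q)^`().[c] *: delta c.
Proof.
elim/poly_ind: q => [|q m IH]; first by rewrite rmorph0 deriv0 !horner0 scale0r raddf0.
rewrite rmorphD rmorphM /= map_polyX map_polyC /= hornerMXaddC derivMXaddC.
rewrite deltaD field_derivation_int addr0 deltaM IH hornerD hornerM hornerX.
by rewrite scalerDl scalerA addrC mulrC.
Qed.

Lemma field_derivation_simple_root (q : {poly int}) c :
  root (map_poly intr q) c -> (map_poly intr q)^`().[c] != 0 -> delta c = 0.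
Proof.
move=> /eqP qc0 q'c_neq0; apply: (scalerI q'c_neq0).
by rewrite -field_derivation_horner qc0 raddf0 scaler0.
Qed.

End FieldDerivation.

Section AlgebraDerivation.
Variables (F : fieldType) (A : algType F) (d : A -> A).
Hypotheses (dD : {morph d : x y / x + y})
  (dM : forall x y, d (x * y) = d x * y + x * d y).

Lemma derivation_scalar_field :
  {morph (fun c : F => d c%:A) : x y / x + y} /\
  forall x y : F, d (x * y)%:A = y *: d x%:A + x *: d y%:A.
Proof.
split=> [x y|x y]; first by rewrite /= scalerDl dD.
by rewrite -scalerA -mulr_algl dM mulr_algl mulr_algr.
Qed.

Lemma derivation_scale : (forall c : F, d c%:A = 0) ->
  forall (c : F) x, d (c *: x) = c *: d x.
Proof. by move=> d_alg c x; rewrite -mulr_algl dM d_alg mul0r add0r mulr_algl. Qed.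

End AlgebraDerivation.

Section AlgebraicOverPrimeField.
Variable F : fieldType.
Local Notation intpoly q := (map_poly (intr : int -> F) q).

Lemma pchar_of_deriv_eq0 (P : {poly F}) :
  P^`() = 0 -> (1 < size P)%N -> exists p, p \in [pchar F].
Proof.
move=> P'0 sizeP; have P_neq0 : P != 0 by rewrite -size_poly_eq0 -lt0n ltnW.
have sizeP1 : (size P).-2.+1 = (size P).-1 by case: (size P) sizeP => [|[]].
apply: (@natf0_pchar _ (size P).-1); first by rewrite -sizeP1.
have : P^`()`_(size P).-2 = 0 by rewrite P'0 coef0.
rewrite coef_deriv sizeP1 -lead_coefE => /eqP.
by rewrite -[lead_coef P *+ _]mulr_natr mulf_eq0 lead_coef_eq0 (negbTE P_neq0).
Qed.

Lemma int_poly_deriv_eq0 p (q : {poly int}) : p \in [pchar F] ->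
  (intpoly q)^`() = 0 -> intpoly q = intpoly (\poly_(j < size q) q`_(j * p)) \Po 'X^p.
Proof.
move=> pcharF q'0; have p_gt0 := prime_gt0 (pcharf_prime pcharF).
apply/polyP=> i; rewrite coef_comp_poly_Xn // !coef_map /= coef_poly.
have [/divnK-> | p_ndvd_i] := boolP (p %| i)%N.
  by case: ltnP => // le; rewrite nth_default // (leq_trans le (leq_div _ _)).
case: i p_ndvd_i => [|i p_ndvd_i]; first by rewrite dvdn0.
have : (intpoly q)^`()`_i = 0 by rewrite q'0 coef0.
rewrite coef_deriv -mulr_natr coef_map /= => /eqP; rewrite mulf_eq0.
by rewrite -(dvdn_pcharf pcharF) (negbTE p_ndvd_i) orbF => /eqP.
Qed.

(* [(intpoly r).[c] ^+ p = (intpoly r).[c ^+ p]] as Frobenius fixes integers. *)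
Lemma root_int_poly_comp_Xp p (r : {poly int}) c : p \in [pchar F] ->
  root (intpoly r \Po 'X^p) c -> root (intpoly r) c.
Proof.
move=> pcharF; rewrite /root horner_comp hornerXn.
have fixed : map_poly (pFrobenius_aut pcharF) (intpoly r) = intpoly r.
  by apply/polyP=> i; rewrite !coef_map /= rmorph_int.
rewrite -[X in X.[c ^+ p]]fixed horner_map /= pFrobenius_autE.
by rewrite expf_eq0 prime_gt0 // (pcharf_prime pcharF).
Qed.

(* Descent on the size of q: replace q by q' while q' vanishes at c but is
   nonzero; if q' = 0, then q is a polynomial in X^p, and we pass to it. *)
Lemma algebraic_simple_int_root : algebraic_over_prime_field F ->
  forall c : F, exists q : {poly int},
    root (intpoly q) c /\ (intpoly q)^`().[c] != 0.
Proof.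
move=> algF c; have [q0 [q0_neq0 q0c]] := algF c.
have [m] := ubnP (size (intpoly q0)); elim: m q0 q0_neq0 q0c => // m IH q q_neq0 qc.
rewrite ltnS => size_q.
have [q'c_neq0 | /negPn/eqP q'c] := boolP ((intpoly q)^`().[c] != 0); first by exists q.
have size_q_gt1 := root_size_gt1 q_neq0 qc.
have [q'_neq0 | /negPn/eqP q'0] := boolP ((intpoly q)^`() != 0).
  apply: (IH q^`()); rewrite -?deriv_map ?/root ?q'c //.
  by apply: leq_trans size_q; apply: lt_size_deriv.
have [p pcharF] := pchar_of_deriv_eq0 q'0 size_q_gt1.
have q_comp := int_poly_deriv_eq0 pcharF q'0.
set r := \poly_(j < size q) q`_(j * p) in q_comp.
have r_neq0 : intpoly r != 0.
  by apply: contraNneq q_neq0 => r0; rewrite q_comp r0 comp_poly0.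
apply: (IH r r_neq0); first by apply: (root_int_poly_comp_Xp pcharF); rewrite -q_comp.
have size_comp : (size (intpoly q)).-1 = ((size (intpoly r)).-1 * p)%N.
  by rewrite q_comp size_comp_poly size_polyXn.
have p_gt1 := prime_gt1 (pcharf_prime pcharF).
have size_r_gt0 : (0 < size (intpoly r))%N by rewrite lt0n size_poly_eq0.
nia.
Qed.

End AlgebraicOverPrimeField.

Section GroupAlgebraDerivation.
Variables (F : fieldType) (gT : finGroupType).
Local Notation A := (galg F gT).

Lemma inner_derivation_is_derivation (d : A -> A) :
  is_inner_derivation d -> is_derivation d.
Proof.
case=> beta dE; split=> x y; rewrite !dE -!galg_mulE.
  by rewrite mulrDl mulrDr opprD addrACA.
by rewrite mulrBl mulrBr !mulrA [RHS]addrC subrKA.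
Qed.

Lemma galg_mul_sum (f g : gT -> F) (P Q : gT -> A) :
  (\sum_u f u *: P u) * (\sum_h g h *: Q h) =
  \sum_u \sum_h (f u * g h) *: (P u * Q h).
Proof.
rewrite mulr_suml; apply: eq_bigr => u _; rewrite mulr_sumr.
by apply: eq_bigr => h _; rewrite -scalerAl -scalerAr scalerA.
Qed.

Section CocycleDerivation.
Variable D : gT -> A.

Definition galg_extend (x : A) : A := \sum_g x g *: D g.

Lemma galg_extend_is_linear : linear galg_extend.
Proof.
move=> c x y; rewrite /galg_extend scaler_sumr -big_split /=.
by apply: eq_bigr => g _; rewrite ffunE galg_scaleE scalerDl scalerA.
Qed.

HB.instance Definition _ :=
  GRing.isLinear.Build F A A *:%R galg_extend galg_extend_is_linear.

Lemma galg_extend_of g : galg_extend (galg_of g) = D g.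
Proof.
rewrite /galg_extend (bigD1 g) //= big1 ?addr0; first by rewrite galg_ofE eqxx scale1r.
by move=> h /negbTE ne; rewrite galg_ofE ne scale0r.
Qed.

Hypothesis D_cocycle : forall g h, D (g * h)%g = D g * galg_of h + galg_of g * D h.

Lemma cocycle_derivation : is_derivation galg_extend.
Proof.
split=> [x y|x y]; first exact: raddfD.
have -> : galg_extend (galg_mul x y) = \sum_u \sum_h (x u * y h) *: D (u * h)%g.
  rewrite -galg_mulE {1}(galg_expand x) {1}(galg_expand y) galg_mul_sum linear_sum.
  apply: eq_bigr => u _; rewrite linear_sum; apply: eq_bigr => h _.
  by rewrite linearZ /= galg_ofM galg_extend_of.
rewrite -!galg_mulE /galg_extend.
rewrite [in X in X + _](galg_expand y) [in X in _ + X](galg_expand x) !galg_mul_sum.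
rewrite -big_split; apply: eq_bigr => u _; rewrite -big_split; apply: eq_bigr => h _.
by rewrite D_cocycle scalerDr.
Qed.

End CocycleDerivation.

Lemma derivation_inner_of_linear (d : A -> A) : is_derivation d ->
  (forall c x, d (c *: x) = c *: d x) -> (#|gT|%:R : F) != 0 ->
  is_inner_derivation d.
Proof.
case=> dD dM dZ N_neq0.
have d0 : d 0 = 0 by rewrite -[0 in LHS](scale0r (0 : A)) dZ scale0r.
pose S := \sum_h d (galg_of h) * galg_of h^-1.
have dg_average g : #|gT|%:R *: d (galg_of g) = S * galg_of g - galg_of g * S.
  have dg_shift h : d (galg_of g) =
      d (galg_of (g * h)%g) * galg_of h^-1 - galg_of g * (d (galg_of h) * galg_of h^-1).
    by rewrite -galg_ofM dM mulrDl -!mulrA galg_ofM mulgV mulr1 addrK.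
  rewrite scaler_nat -sumr_const (eq_bigr _ (fun h _ => dg_shift h)) sumrB -mulr_sumr.
  congr (_ - _); rewrite /S mulr_suml [RHS](reindex_inj (mulgI g)) /=.
  by apply: eq_bigr => h _; rewrite -mulrA galg_ofM invMg mulgKV.
pose beta := - (#|gT|%:R)^-1 *: S.
have dE g : d (galg_of g) = galg_of g * beta - beta * galg_of g.
  rewrite -scalerAl -scalerAr -scalerBr scaleNr -scalerN opprB -dg_average.
  by rewrite scalerA mulVf ?scale1r.
exists beta => x; rewrite -!galg_mulE {1 2 3}(galg_expand x) (big_morph d dD d0).
rewrite mulr_suml mulr_sumr -sumrB; apply: eq_bigr => g _.
by rewrite dZ dE scalerBr scalerAl scalerAr.
Qed.

Lemma derivation_inner (d : A -> A) : algebraic_over_prime_field F ->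
  (#|gT|%:R : F) != 0 -> is_derivation d -> is_inner_derivation d.
Proof.
move=> algF N_neq0 [dD dM].
have [deltaD deltaM] := derivation_scalar_field (A := A) dD dM.
have d_alg c : d c%:A = 0.
  have [q [qc q'c]] := algebraic_simple_int_root algF c.
  by apply: (field_derivation_simple_root deltaD deltaM qc).
exact: derivation_inner_of_linear (conj dD dM) (derivation_scale dM d_alg) N_neq0.
Qed.

End GroupAlgebraDerivation.

Section DicyclicGroup.
Local Open Scope group_scope.
Variables (gT : finGroupType) (n : nat) (a b : gT).
Hypotheses (a_order : a ^+ (n + n) = 1) (a_n : a ^+ n = b ^+ 2)
  (conj_ab : a ^ b = a^-1) (gen_ab : <[a]> <*> <[b]> = [set: gT]).
Local Notation C := <[a]>.

Lemma conjg_cycle_b y : y \in C -> y ^ b = y^-1.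
Proof. by case/cycleP=> i ->; rewrite conjXg conj_ab expgVn. Qed.

Lemma b_mul_cycle y : y \in C -> b * y = y^-1 * b.
Proof. by move=> yC; rewrite -{1}(invgK y) -(conjg_cycle_b (groupVr yC)) conjgE mulKVg. Qed.

Lemma dicyclic_cover x : x \in C \/ x \in C :* b.
Proof.
have nCb : <[b]> \subset 'N(C).
  by rewrite cycle_subG; apply/normP; rewrite -cycleJ conj_ab cycleV.
have : x \in C * <[b]> by rewrite -norm_joinEr // gen_ab inE.
case/mulsgP=> y _ yC /cycleP[j ->] ->.
have b_even : b ^+ (j./2).*2 \in C by rewrite -mul2n expgM -a_n -expgM mem_cycle.
rewrite -(odd_double_half j) addnC expgD mulgA; case: (odd j).
  by right; rewrite expg1 mem_rcoset mulgK groupM.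
by left; rewrite expg0 mulg1 groupM.
Qed.

Lemma notin_cycleP x : x \notin C -> exists2 u, u \in C & x = u * b.
Proof. by case: (dicyclic_cover x) => [-> // | /rcosetP]. Qed.

Lemma conjg_a_sign x : a ^ x = if x \in C then a else a^-1.
Proof.
have aC y : y \in C -> a ^ y = a.
  by case/cycleP=> i ->; rewrite conjgE (commuteX _ (commute_refl a)) mulKg.
case: ifPn => [/aC // | /notin_cycleP[y yC ->]].
by rewrite conjgM aC.
Qed.

Lemma card_dicyclic_dvd : (#|gT| %| 4 * n)%N.
Proof.
have a_dvd : (#[a] %| #|gT|)%N by rewrite -cardsT order_dvdG ?inE.
have card_le : (#|gT| <= #[a] * 2)%N.
  rewrite -cardsT muln2 -addnn /order -{2}(card_rcoset C b).
  apply: leq_trans (leq_card_setU _ _); apply/subset_leq_card/subsetP=> x _.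
  by rewrite inE; case: (dicyclic_cover x) => ->; rewrite ?orbT.
have [k card_G] := dvdnP a_dvd.
have k_dvd2 : (k %| 2)%N.
  have : (0 < k <= 2)%N.
    move: card_le (cardG_gt0 [set: gT]%G); rewrite cardsT card_G.
    by have := order_gt0 a; nia.
  by case: k {card_G} => [|[|[|k]]].
have a_dvd2n : (#[a] %| n + n)%N by rewrite order_dvdn a_order.
by rewrite card_G (_ : 4 * n = 2 * (n + n))%N ?dvdn_mul //; lia.
Qed.

Lemma dicyclic_card_coprime p : prime p -> odd p -> coprime n p -> ~~ (p %| #|gT|)%N.
Proof.
move=> p_pr p_odd cop; apply/negP=> /dvdn_trans/(_ card_dicyclic_dvd).
rewrite Gauss_dvdl 1?coprime_sym // (_ : 4 = 2 ^ 2)%N // Euclid_dvdX // andbT.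
by rewrite dvdn_prime2 // => /eqP p2; rewrite p2 in p_odd.
Qed.

Lemma morphim_dicyclic_abelian (rT : finGroupType)
    (f : {morphism [set: gT] >-> rT}) :
  f a ^+ 2 = 1 -> abelian (f @* [set: gT]).
Proof.
move=> fa2; have := morphimY f (subsetT C) (subsetT <[b]>).
rewrite gen_ab => ->; rewrite !morphim_cycle ?inE //.
rewrite abelianY !cycle_abelian cycle_subG /=.
apply/centP=> _ /cycleP[i ->]; apply: commuteX.
have fa_inv : (f a)^-1 = f a by apply/eqP; rewrite eq_invg_mul -fa2.
by rewrite /commute [RHS]conjgC -morphJ ?inE // conj_ab morphV ?inE // fa_inv.
Qed.

Section OuterDerivation.
Local Open Scope ring_scope.
Variables (F : fieldType) (p : nat).
Hypotheses (pcharF : p \in [pchar F]) (p_dvd_a : (p %| #[a]%g)%N)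
  (p_dvd_n : (p %| n)%N) (p_odd : odd p).
Local Notation A := (galg F gT).

Let p_ndvd2 : ~~ (p %| 2)%N.
Proof. by rewrite dvdn_prime2 ?(pcharf_prime pcharF) //; apply: contraTneq p_odd => ->. Qed.

(* The exponent of [y] in base [a], read in [F]; it is only defined modulo
   [#[a]], which is harmless because [p] divides [#[a]]. *)
Definition cycle_log (y : gT) : F :=
  if [pick k : 'I_#[a]%g | (a ^+ k == y)%g] is Some k then (k : nat)%:R else 0.

Lemma cycle_logX i : cycle_log (a ^+ i)%g = i%:R.
Proof.
have natr_mod j : (j %% #[a]%g)%:R = j%:R :> F.
  rewrite {2}(divn_eq j #[a]%g) natrD natrM.
  by move: p_dvd_a; rewrite (dvdn_pcharf pcharF) => /eqP->; rewrite mulr0 add0r.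
rewrite /cycle_log; case: pickP => [k | no_k].
  by rewrite eq_expg_mod_order modn_small // => /eqP->.
have := no_k (Ordinal (ltn_pmod i (order_gt0 a))).
by rewrite /= expg_mod_order eqxx.
Qed.

Lemma cycle_logM y z : y \in C -> z \in C ->
  cycle_log (y * z)%g = cycle_log y + cycle_log z.
Proof. by case/cycleP=> i -> /cycleP[j ->]; rewrite -expgD !cycle_logX natrD. Qed.

Lemma cycle_logV y : y \in C -> cycle_log y^-1 = - cycle_log y.
Proof.
move=> yC; apply/eqP; rewrite -addr_eq0 -cycle_logM ?groupV // mulVg.
by rewrite -(expg0 a) cycle_logX.
Qed.

Definition cycle_sign (x : gT) : F := if x \in C then 1 else -1.

Definition crossed_log (x : gT) : F :=
  if x \in C then cycle_log x else - cycle_log (x * b^-1)%g.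

Lemma crossed_log_cycle y : y \in C -> crossed_log y = cycle_log y.
Proof. by rewrite /crossed_log => ->. Qed.

Lemma crossed_log_rcoset u : (u * b)%g \notin C -> crossed_log (u * b)%g = - cycle_log u.
Proof. by rewrite /crossed_log mulgK => /negbTE->. Qed.

Lemma crossed_logM g h :
  crossed_log (g * h)%g = cycle_sign h * crossed_log g + crossed_log h.
Proof.
rewrite /cycle_sign.
have [gC | gNC] := boolP (g \in C); have [hC | hNC] := boolP (h \in C).
- by rewrite !crossed_log_cycle ?groupM ?cycle_logM ?mul1r.
- have ghNC : (g * h)%g \notin C by rewrite groupMl.
  have [v vC def_h] := notin_cycleP hNC; rewrite def_h mulgA in ghNC hNC *.
  by rewrite !crossed_log_rcoset // crossed_log_cycle // mulN1r cycle_logM // opprD.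
- have ghNC : (g * h)%g \notin C by rewrite groupMr.
  have [u uC def_g] := notin_cycleP gNC.
  rewrite def_g -mulgA b_mul_cycle // mulgA in ghNC gNC *.
  rewrite !crossed_log_rcoset // crossed_log_cycle // mul1r cycle_logM ?groupV //.
  by rewrite cycle_logV // opprD opprK.
- have [u uC def_g] := notin_cycleP gNC; have [v vC def_h] := notin_cycleP hNC.
  rewrite def_g def_h in gNC hNC *.
  have -> : (u * b * (v * b) = u * v^-1 * a ^+ n)%g.
    by rewrite a_n (expgSr _ 1) expg1 -(mulgA u) (mulgA b) b_mul_cycle // !mulgA.
  rewrite crossed_log_cycle ?groupM ?groupV ?mem_cycle // !crossed_log_rcoset //.
  rewrite !cycle_logM ?groupM ?groupV ?mem_cycle // cycle_logV // cycle_logX.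
  by move: p_dvd_n; rewrite (dvdn_pcharf pcharF) => /eqP->; rewrite addr0 mulN1r opprK.
Qed.

Definition zeta : A := galg_of a - galg_of a^-1.

Lemma zeta_galg_of h : zeta * galg_of h = cycle_sign h *: (galg_of h * zeta).
Proof.
rewrite /zeta /cycle_sign mulrBl (galg_of_conjg a) (galg_of_conjg a^-1).
rewrite conjVg conjg_a_sign mulrBr.
by case: ifP; rewrite ?invgK ?scale1r ?scaleN1r ?opprB.
Qed.

Definition outer_cocycle (g : gT) : A := crossed_log g *: (galg_of g * zeta).

Lemma outer_cocycleM g h :
  outer_cocycle (g * h)%g = outer_cocycle g * galg_of h + galg_of g * outer_cocycle h.
Proof.
rewrite /outer_cocycle -scalerAl -mulrA zeta_galg_of -!scalerAr scalerA mulrA galg_ofM.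
by rewrite -scalerDl crossed_logM mulrC.
Qed.

Lemma outer_derivation_not_inner : ~ is_inner_derivation (galg_extend outer_cocycle).
Proof.
case=> beta inner; pose c : A := galg_of a + galg_of a^-1.
have c_central : c * beta = beta * c.
  apply: galg_central => h; rewrite mulrDl (galg_of_conjg a) (galg_of_conjg a^-1).
  by rewrite conjVg conjg_a_sign -mulrDr; case: ifP; rewrite ?invgK // addrC.
have := inner c; rewrite -!galg_mulE c_central subrr linearD /= !galg_extend_of.
(* Evaluate at [1], where the left-hand side takes the value [-2]. *)
move/(congr1 (fun f : A => f 1%g)); apply/eqP.
have a2_neq1 : (1 == a * a)%g = false.
  apply/negbTE; rewrite eq_sym; apply: contra p_ndvd2 => /eqP a2.
  by rewrite (dvdn_trans p_dvd_a) // order_dvdn (expgSr _ 1) expg1 a2.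
have a2V_neq1 : (1 == (a * a)^-1)%g = false by rewrite eq_sym eq_invg1 eq_sym.
rewrite /outer_cocycle !crossed_log_cycle ?groupV ?cycle_id //.
rewrite cycle_logV ?cycle_id // -(expg1 a) cycle_logX expg1 scale1r scaleN1r.
rewrite /zeta !mulrBr !galg_ofM mulgV mulVg -invMg !ffunE /= eqxx a2_neq1 a2V_neq1.
by rewrite sub0r subr0 -opprD oppr_eq0 -mulr2n -(dvdn_pcharf pcharF).
Qed.

Lemma exists_outer_derivation :
  exists d : A -> A, is_derivation d /\ ~ is_inner_derivation d.
Proof.
exists (galg_extend outer_cocycle); split; last exact: outer_derivation_not_inner.
exact: cocycle_derivation outer_cocycleM.
Qed.

End OuterDerivation.
End DicyclicGroup.

Section DihedralQuotient.
Local Open Scope group_scope.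
Variable q : nat.
Hypothesis q_gt1 : (1 < q)%N.

Lemma dihedral_homg_dicyclic n : (q %| n)%N ->
  'D_q.*2 \homg Grp (a : b : (a ^+ (n + n) = 1, a ^+ n = b ^+ 2, a ^ b = a^-1)).
Proof.
move=> /dvdnP[k ->].
have := isoGrp_hom (Grp_dihedral q_gt1); case/existsP=> -[x y] /= /eqP[defD xq y2 xy].
apply/existsP; exists (x, y); rewrite /= !xpair_eqE /= defD eqxx /=.
by rewrite -mulnDl !(mulnC _ q) !expgM xq !expg1n y2 xy !eqxx.
Qed.

Lemma dihedral_nonabelian : odd q -> ~~ abelian 'D_q.*2.
Proof.
move=> q_odd; apply/negP=> abD.
have := isoGrp_hom (Grp_dihedral q_gt1); case/existsP=> -[x y] /= /eqP[defD xq y2 xy].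
have x_inv : x^-1 = x.
  by rewrite -xy conjgE (centsP abD x (in_setT x) y (in_setT y)) mulKg.
have x1 : x = 1.
  have cop : coprime 2 q by rewrite coprime2n.
  apply/eqP; rewrite -order_eq1 -dvdn1 -(eqnP cop) dvdn_gcd !order_dvdn xq eqxx.
  by rewrite andbT expgS expg1 -{1}x_inv mulVg.
have : (#|'D_q.*2| <= 2)%N.
  by rewrite -defD x1 cycle1 joing1G dvdn_leq // order_dvdn y2.
by rewrite card_dihedral // -addnn; lia.
Qed.

End DihedralQuotient.

Lemma dicyclic_prime_dvd_order (gT : finGroupType) n p (a b : gT) :
  ([set: gT] \isog Grp (a : b : (a ^+ (n + n) = 1, a ^+ n = b ^+ 2, a ^ b = a^-1)))%g ->
  prime p -> odd p -> (p %| n)%N ->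
  (a ^ b = a^-1)%g -> (<[a]> <*> <[b]> = [set: gT])%g -> (p %| #[a]%g)%N.
Proof.
move=> isoT p_pr p_odd p_dvd_n conj_ab gen_ab; apply/idPn=> p_ndvd_a.
have p_gt1 := prime_gt1 p_pr.
have : ([set: 'D_p.*2]%G \homg [set: gT])%g by rewrite isoT dihedral_homg_dicyclic.
case/homgP=> f im_f.
have fa_cop : coprime #[f a]%g p.
  rewrite coprime_sym prime_coprime //; apply: contra p_ndvd_a => p_dvd.
  exact: dvdn_trans p_dvd (morph_order f (in_setT a)).
have fa2 : (f a ^+ 2 = 1)%g.
  have := order_dvdG (in_setT (f a)); rewrite card_dihedral // => fa_dvd.
  by apply/eqP; rewrite -order_dvdn -(Gauss_dvdr 2 fa_cop) muln2.
have := morphim_dicyclic_abelian conj_ab gen_ab fa2; rewrite im_f.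
by apply/negP/dihedral_nonabelian.
Qed.

Theorem corollary4p6 (n : nat) (F : fieldType) (gT : finGroupType) (p : nat)
  (hn : (2 <= n)%N)
  (hF : algebraic_over_prime_field F)
  (hp : prime p) (hpodd : odd p)
  (hT : ([set: gT]%G \isog
          Grp (a : b : (a ^+ (n + n) = 1, a ^+ n = b ^+ 2, a ^ b = a ^-1)))%g) :
  ( ( [pchar F]%R =i pred0 \/ (p \in [pchar F]%R /\ coprime n p) ) ->
      forall d : galg F gT -> galg F gT,
        is_derivation d <-> is_inner_derivation d )
  /\
  ( (p \in [pchar F]%R /\ ~~ coprime n p) ->
      (forall d : galg F gT -> galg F gT,
         is_inner_derivation d -> is_derivation d) /\
      (exists d : galg F gT -> galg F gT,
         is_derivation d /\ ~ is_inner_derivation d) ).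
Proof.
have /existsP[[a b] /= /eqP[gen_ab a_order a_n conj_ab]] := isoGrp_hom hT.
split=> [pchar_cases d | [pcharF not_coprime]].
  split; last exact: inner_derivation_is_derivation.
  apply: derivation_inner hF _.
  case: pchar_cases => [/pcharf0P-> | [pcharF coprime_np]].
    by rewrite -lt0n -cardsT (cardG_gt0 [set: gT]%G).
  rewrite -(dvdn_pcharf pcharF).
  exact: (dicyclic_card_coprime a_order a_n conj_ab gen_ab hp hpodd coprime_np).
split; first exact: inner_derivation_is_derivation.
have p_dvd_n : (p %| n)%N.
  by move: not_coprime; rewrite coprime_sym prime_coprime // negbK.
have p_dvd_a := dicyclic_prime_dvd_order hT hp hpodd p_dvd_n conj_ab gen_ab.
exact: (exists_outer_derivation a_n conj_ab gen_ab pcharF p_dvd_a p_dvd_n hpodd).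
Qed.
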